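(* Let $k\ge 1$ be an integer and let $r=R(k,k+1)$ be the Ramsey number (the least $r$ such that every simple graph on at least $r$ vertices contains an independent set of size $k$ or a clique of size $k+1$). Then for every graph $G$ on at least $r$ vertices, $\lambda(G)\ge k$; consequently $\Lambda_n\ge k$ for all $n\ge r$. In particular (since $R(3,4)=9$), $\Lambda_n\ge 3$ for all $n\ge 9$.
   Context: All graphs are finite, simple and undirected. For a graph $G=(V,E)$ and $v\in V$, let $N_v$ be the neighbourhood of $v$; the local complementation $G^v$ is obtained by complementing the subgraph induced on $N_v$. The LC orbit $[G]$ is the set of graphs obtainable from $G$ by finite sequences of local complementations. $\alpha(G)$ is the independence number of $G$, $\lambda(G)=\max_{H\in[G]}\alpha(H)$, and $\Lambda_n$ is the minimum of $\lambda(G)$ over all graphs $G$ on $n$ vertices. *)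

From mathcomp Require Import all_boot.
Set Implicit Arguments. Unset Strict Implicit. Unset Printing Implicit Defensive.

(* A (possibly non-simple) graph on vertex set 'I_n, given by its set of
   ordered adjacent pairs. Simple graphs are those satisfying [simple_graph]. *)
Definition graph (n : nat) := {set 'I_n * 'I_n}.

Section Graphs.
Variable n : nat.
Implicit Types (G H : graph n) (S : {set 'I_n}).

Definition adj G (x y : 'I_n) : bool := (x, y) \in G.

Definition simple_graph G : bool :=
  [forall x, ~~ adj G x x] && [forall x, forall y, adj G x y == adj G y x].

Definition nbhd G (v : 'I_n) : {set 'I_n} := [set x | adj G v x].

Definition lc G (v : 'I_n) : graph n :=
  [set p : 'I_n * 'I_n |
    if [&& p.1 \in nbhd G v, p.2 \in nbhd G v & p.1 != p.2]
    then ~~ adj G p.1 p.2 else adj G p.1 p.2].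

Definition lc_step : rel (graph n) := fun G H => [exists v, H == lc G v].

Definition lc_orbit G : {set graph n} := [set H | connect lc_step G H].

Definition independent G S : bool :=
  [forall x in S, forall y in S, ~~ adj G x y].

Definition clique G S : bool :=
  [forall x in S, forall y in S, (x != y) ==> adj G x y].

Definition alpha G : nat := \max_(S : {set 'I_n} | independent G S) #|S|.

Definition lambda G : nat := \max_(H in lc_orbit G) alpha H.

End Graphs.

(* Lambda_n = min of lambda(G) over simple graphs G on n vertices
   (the empty graph exists, and lambda G <= n, so the default n is harmless) *)
Definition Lambda (n : nat) : nat :=
  \big[minn/n]_(G : graph n | simple_graph G) lambda G.

Definition ramsey_prop (k l r : nat) : Prop :=
  forall m, r <= m -> forall G : graph m, simple_graph G ->
    exists S : {set 'I_m},
      (independent G S && (#|S| == k)) || (clique G S && (#|S| == l)).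

Definition is_ramsey_number (k l r : nat) : Prop :=
  ramsey_prop k l r /\ forall r', ramsey_prop k l r' -> r <= r'.

From mathcomp Require Import all_boot zify.
Set Implicit Arguments. Unset Strict Implicit. Unset Printing Implicit Defensive.

(* A clique S of G and any v in S turn, after local complementation at v,
   into the independent set S \ v: the edges of S \ v all lie in N_v and are
   deleted.  Hence an independent k-set or a (k+1)-clique in G forces
   lambda(G) >= k, so any graph on R(k,k+1) vertices has lambda >= k.
   The bound R(3,4) <= 9 is the classical counting argument: in a graph with
   no independent 3-set and no 4-clique every non-neighbourhood is a clique,
   so has at most 3 vertices, and every neighbourhood has at most 5 vertices
   (for an edge vu, at most 2 common neighbours and at most 3 neighbours of v
   outside N_u); so a graph of order >= 9 would be 5-regular on 9 vertices, contradicting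
   the handshake lemma. *)

Section SimpleGraphs.
Variable n : nat.
Implicit Types (G : graph n) (S : {set 'I_n}).

Lemma simple_adj_irr G x : simple_graph G -> ~~ adj G x x.
Proof. by case/andP => /forallP. Qed.

Lemma simple_adj_sym G x y : simple_graph G -> adj G x y = adj G y x.
Proof. by case/andP => _ /forallP /(_ x) /forallP /(_ y) /eqP. Qed.

Lemma simple_adj_neq G x y : simple_graph G -> adj G x y -> x != y.
Proof. by move=> sG; apply: contraTneq => ->; apply: simple_adj_irr. Qed.

Lemma simple_graph0 : simple_graph (set0 : graph n).
Proof.
apply/andP; split; apply/forallP => x; first by rewrite /adj inE.
by apply/forallP => y; rewrite /adj !inE.
Qed.

Lemma clique_adj G S x y :
  clique G S -> x \in S -> y \in S -> x != y -> adj G x y.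
Proof. by move/forallP/(_ x)/implyP => h /h /forallP/(_ y)/implyP h2 /h2 /implyP. Qed.

Lemma independent_le_alpha G S : independent G S -> #|S| <= alpha G.
Proof. exact: leq_bigmax_cond. Qed.

Lemma alpha_le_lambda G : alpha G <= lambda G.
Proof. by apply: leq_bigmax_cond; rewrite inE connect0. Qed.

Lemma alpha_lc_le_lambda G v : alpha (lc G v) <= lambda G.
Proof.
apply: leq_bigmax_cond; rewrite inE; apply: connect1.
by apply/existsP; exists v.
Qed.

Lemma lambda_le_order G : lambda G <= n.
Proof.
apply/bigmax_leqP => H _; apply/bigmax_leqP => S _.
exact: leq_trans (max_card _) (eq_leq (card_ord n)).
Qed.

Lemma lc_clique_independent G S v : simple_graph G ->
  clique G S -> v \in S -> independent (lc G v) (S :\ v).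
Proof.
move=> sG cS vS; apply/forallP => x; apply/implyP; rewrite !inE => /andP[xv xS].
apply/forallP => y; apply/implyP; rewrite !inE => /andP[yv yS].
have avx : adj G v x by apply: (clique_adj cS); rewrite // eq_sym.
have avy : adj G v y by apply: (clique_adj cS); rewrite // eq_sym.
rewrite /adj /lc inE /= -!/(adj G _ _) !inE avx avy /=.
case: (eqVneq x y) => [->|xy] /=; first exact: simple_adj_irr.
by rewrite negbK (clique_adj cS).
Qed.

Lemma clique_le_lambda G S : simple_graph G -> clique G S -> #|S| <= (lambda G).+1.
Proof.
move=> sG cS; have [->|[v vS]] := set_0Vmem S; first by rewrite cards0.
rewrite (cardsD1 v S) vS ltnS.
apply: leq_trans (alpha_lc_le_lambda G v).
exact/independent_le_alpha/lc_clique_independent.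
Qed.

Lemma lambda_ge_of_independent_or_clique G k : simple_graph G ->
  (exists S, (independent G S && (#|S| == k)) || (clique G S && (#|S| == k.+1))) ->
  k <= lambda G.
Proof.
move=> sG [S /orP[/andP[iS /eqP <-]|/andP[cS /eqP kS]]].
  exact: leq_trans (independent_le_alpha iS) (alpha_le_lambda G).
by rewrite -ltnS -kS clique_le_lambda.
Qed.

Lemma Lambda_ge k : (forall G, simple_graph G -> k <= lambda G) -> k <= Lambda n.
Proof.
move=> klambda; apply: (big_ind (fun m => k <= m)).
- exact: leq_trans (klambda _ simple_graph0) (lambda_le_order _).
- by move=> x y kx ky; rewrite leq_min kx ky.
- exact: klambda.
Qed.

Definition non_nbhd G v : {set 'I_n} := [set y | (y != v) && ~~ adj G v y].

Lemma card_nbhd_non_nbhd G v : simple_graph G ->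
  (#|nbhd G v| + #|non_nbhd G v|).+1 = n.
Proof.
move=> sG; have compl : ~: nbhd G v = v |: non_nbhd G v.
  apply/setP => y; rewrite !inE.
  by case: (eqVneq y v) => [->|] //=; rewrite simple_adj_irr.
have := cardsC (nbhd G v); rewrite compl cardsU1 !inE eqxx card_ord.
by rewrite add1n addnS.
Qed.

Lemma sum_card_nbhd G : \sum_v #|nbhd G v| = #|G|.
Proof.
rewrite -sum1_card big_mkcond /=.
rewrite (eq_bigr (fun v => \sum_w (if (v, w) \in G then 1 else 0))); last first.
  by move=> v _; rewrite -sum1_card big_mkcond /=; apply: eq_bigr => w _; rewrite /nbhd inE.
by rewrite pair_big /= [RHS]big_mkcond; apply: eq_bigr => -[].
Qed.

(* The swap (x, y) |-> (y, x) pairs the edges with x > y with those with x < y. *)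
Lemma simple_graph_card_even G : simple_graph G -> ~~ odd #|G|.
Proof.
move=> sG; pose B := [set p : 'I_n * 'I_n | p.1 < p.2].
pose swap (p : 'I_n * 'I_n) := (p.2, p.1).
have swapK : involutive swap by case.
have upper_lower : G :\: B = swap @: (G :&: B).
  apply/setP => -[x y]; rewrite !inE /=; apply/idP/imsetP.
  - case/andP => yx xyG; exists (y, x); rewrite // !inE /=.
    rewrite -[(y, x) \in G]/(adj G y x) -simple_adj_sym // [adj _ _ _]xyG /=.
    by rewrite ltn_neqAle eq_sym (simple_adj_neq sG xyG) leqNgt.
  - case=> -[a b]; rewrite !inE /= => /andP[abG ab] [-> ->].
    rewrite -[(b, a) \in G]/(adj G b a) -simple_adj_sym // /adj abG andbT.
    by rewrite -leqNgt ltnW.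
have := cardsID B G; rewrite upper_lower card_imset; last exact: inv_inj.
by move <-; rewrite addnn odd_double.
Qed.

End SimpleGraphs.

Lemma card_setD1_ge (T : finType) (A : {set T}) m :
  m < #|A| -> exists2 a, a \in A & m <= #|A :\ a|.
Proof.
move=> mA; have /card_gt0P [a aA] : 0 < #|A| by apply: leq_trans mA.
by exists a => //; move: mA; rewrite (cardsD1 a A) aA add1n ltnS.
Qed.

Lemma card_ge3_distinct (T : finType) (A : {set T}) : 3 <= #|A| ->
  exists a b c, [/\ a \in A, b \in A, c \in A & [/\ a != b, a != c & b != c]].
Proof.
case/card_setD1_ge => a aA /card_setD1_ge [b bA /card_setD1_ge [c cA _]].
move: bA cA; rewrite !inE => /andP[ba bA] /andP[cb /andP[ca cA]].
by exists a, b, c; split=> //; split=> //; rewrite eq_sym.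
Qed.

Lemma card_ge4_distinct (T : finType) (A : {set T}) : 4 <= #|A| ->
  exists a b c d, [/\ a \in A, b \in A, c \in A & d \in A] /\
     [/\ a != b, a != c & a != d] /\ [/\ b != c, b != d & c != d].
Proof.
case/card_setD1_ge => a aA /card_setD1_ge [b bA /card_setD1_ge [c cA]].
case/card_setD1_ge => d dA _.
move: bA cA dA; rewrite !inE => /andP[ba bA] /andP[cb /andP[ca cA]].
case/andP => dc /andP[db /andP[da dA]].
by exists a, b, c, d; do !split=> //; rewrite eq_sym.
Qed.

Section RamseyThreeFour.
Variables (n : nat) (G : graph n).
Hypothesis simple_G : simple_graph G.
Hypothesis no_independent3 : forall S, independent G S -> #|S| != 3.
Hypothesis no_clique4 : forall S, clique G S -> #|S| != 4.

Let adj_sym x y : adj G x y = adj G y x := simple_adj_sym x y simple_G.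
Let adj_neq x y : adj G x y -> x != y := simple_adj_neq simple_G.

Lemma adj_of_common_non_nbr x y z : x != y -> x != z -> y != z ->
  ~~ adj G x y -> ~~ adj G x z -> adj G y z.
Proof.
move=> xy xz yz nxy nxz; apply/negPn/negP => nyz.
suff iS : independent G (x |: (y |: [set z])).
  move/negP: (no_independent3 iS); apply.
  by rewrite !cardsU1 cards1 !inE (negbTE xy) (negbTE xz) (negbTE yz).
apply/forallP => u; apply/implyP; rewrite !inE => hu.
apply/forallP => w; apply/implyP; rewrite !inE => hw.
case/or3P: hu => /eqP->; case/or3P: hw => /eqP->;
  by rewrite ?simple_adj_irr // adj_sym.
Qed.

Lemma no_four_clique a b c d : adj G a b -> adj G a c -> adj G a d ->
  adj G b c -> adj G b d -> adj G c d -> False.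
Proof.
move=> ab ac ad bc bd cd.
suff cS : clique G (a |: (b |: (c |: [set d]))).
  move/negP: (no_clique4 cS); apply; rewrite !cardsU1 cards1 !inE.
  by rewrite !(negbTE (adj_neq _)).
apply/forallP => x; apply/implyP; rewrite !inE => hx.
apply/forallP => y; apply/implyP; rewrite !inE => hy; apply/implyP => xy.
case/or4P: hx xy => /eqP->; case/or4P: hy => /eqP-> xy;
  first [done | by rewrite eqxx in xy | by rewrite adj_sym].
Qed.

Lemma card_non_nbhd_le3 v : #|non_nbhd G v| <= 3.
Proof.
rewrite leqNgt; apply/negP => /card_ge4_distinct [a [b [c [d]]]].
rewrite !inE => -[[/andP[av va] /andP[bv vb] /andP[cv vc] /andP[dv vd]]].
move=> [[ab ac ad] [bc bd cd]].
by apply: (@no_four_clique a b c d); apply: (adj_of_common_non_nbr (x := v));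
  rewrite // eq_sym.
Qed.

Lemma card_common_nbhd_le2 u v : adj G v u -> #|nbhd G v :&: nbhd G u| <= 2.
Proof.
move=> vu; rewrite leqNgt; apply/negP => /card_ge3_distinct [a [b [c []]]].
rewrite !inE => /andP[va ua] /andP[vb ub] /andP[vc uc] [ab ac bc].
have no_edge x y : adj G v x -> adj G u x -> adj G v y -> adj G u y ->
    ~~ adj G x y.
  by move=> vx ux vy uy; apply/negP; apply: (@no_four_clique v u x y).
suff iS : independent G (a |: (b |: [set c])).
  move/negP: (no_independent3 iS); apply.
  by rewrite !cardsU1 cards1 !inE (negbTE ab) (negbTE ac) (negbTE bc).
apply/forallP => x; apply/implyP; rewrite !inE => hx.
apply/forallP => y; apply/implyP; rewrite !inE => hy.
by case/or3P: hx => /eqP->; case/or3P: hy => /eqP->; apply: no_edge.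
Qed.

Lemma card_nbhd_setD_le3 u v : adj G v u -> #|nbhd G v :\: nbhd G u| <= 3.
Proof.
move=> vu; rewrite (cardsD1 u) !inE simple_adj_irr // vu ltnS leqNgt.
apply/negP => /card_ge3_distinct [a [b [c []]]].
rewrite !inE => /andP[au /andP[ua va]] /andP[bu /andP[ub vb]].
case/andP => cu /andP[uc vc] [ab ac bc].
by apply: (@no_four_clique v a b c); rewrite // (adj_of_common_non_nbr (x := u)) //
  eq_sym.
Qed.

Lemma card_nbhd_le5 v : #|nbhd G v| <= 5.
Proof.
have [->|[u]] := set_0Vmem (nbhd G v); first by rewrite cards0.
rewrite inE => vu; rewrite -(cardsID (nbhd G u)).
by have := card_common_nbhd_le2 vu; have := card_nbhd_setD_le3 vu; lia.
Qed.

Lemma order_lt9 : n < 9.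
Proof.
rewrite ltnNge; apply/negP => n_ge9.
have v0 : 'I_n := Ordinal (leq_trans (isT : 0 < 9) n_ge9).
have deg5 v : #|nbhd G v| = 5.
  have := card_nbhd_non_nbhd v simple_G; have := card_nbhd_le5 v.
  by have := card_non_nbhd_le3 v; lia.
have n9 : n = 9.
  have := card_nbhd_non_nbhd v0 simple_G; rewrite deg5.
  by have := card_non_nbhd_le3 v0; lia.
have := simple_graph_card_even simple_G.
by rewrite -sum_card_nbhd (eq_bigr _ (fun v _ => deg5 v)) sum_nat_const card_ord n9.
Qed.

End RamseyThreeFour.

Lemma ramsey_prop_3_4_9 : ramsey_prop 3 4 9.
Proof.
move=> n n_ge9 G sG.
have [/existsP //|/existsPn none] := boolP [exists S : {set 'I_n},
  (independent G S && (#|S| == 3)) || (clique G S && (#|S| == 4))].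
suff : n < 9 by rewrite ltnNge n_ge9.
apply: (order_lt9 sG) => S hS; move: (none S); apply: contraNneq => card_S.
- by rewrite hS card_S.
- by rewrite hS card_S orbT.
Qed.

Theorem mainTheorem2 :
  (forall k r : nat, 1 <= k -> is_ramsey_number k k.+1 r ->
     (forall n, r <= n -> forall G : graph n, simple_graph G -> k <= lambda G)
     /\ (forall n, r <= n -> k <= Lambda n))
  /\ (forall n, 9 <= n -> 3 <= Lambda n).
Proof.
split.
- move=> k r _ [ramsey_r _].
  have lambda_ge n : r <= n -> forall G : graph n, simple_graph G -> k <= lambda G.
    by move=> rn G sG; apply: lambda_ge_of_independent_or_clique => //; apply: ramsey_r.
  by split=> // n rn; apply: Lambda_ge; apply: lambda_ge.
- move=> n n_ge9; apply: Lambda_ge => G sG.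
  by apply: lambda_ge_of_independent_or_clique => //; apply: ramsey_prop_3_4_9.
Qed.
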